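(* Each of the following five functions fails to be matrix-convex, in the following sense: there exist $n\ge 1$, a vector $\mathbf{s}\in\mathbb{R}^n$, two matrices $\mathbf{X}_1,\mathbf{X}_2$ in the indicated domain, and $\lambda\in[0,1]$ such that $$f(\mathbf{s},\lambda\mathbf{X}_1+(1-\lambda)\mathbf{X}_2) > \lambda f(\mathbf{s},\mathbf{X}_1)+(1-\lambda) f(\mathbf{s},\mathbf{X}_2).$$ (i) Directed functions, with domain the set of $n\times n$ entrywise nonnegative row-stochastic matrices $\mathbf{X}$ (i.e. $\mathbf{X}\mathbf{1}=\mathbf{1}$), where $\mathbf{D}^{\mathrm{in}}(\mathbf{X})=\mathrm{diag}(\mathbf{X}^\top\mathbf{1})$: - P-Dir: $f(\mathbf{s},\mathbf{X})=\mathbf{s}^\top(2\mathbf{I}-\mathbf{X})^{-\top}(2\mathbf{I}-\mathbf{X})^{-1}\mathbf{s}$; - D-Dir: $f(\mathbf{s},\mathbf{X})=\tfrac12\mathbf{s}^\top(2\mathbf{I}-\mathbf{X})^{-\top}(\mathbf{I}+\mathbf{D}^{\mathrm{in}}(\mathbf{X})-2\mathbf{X})(2\mathbf{I}-\mathbf{X})^{-1}\mathbf{s}$; - PD-Dir: $f(\mathbf{s},\mathbf{X})=\tfrac12\mathbf{s}^\top(2\mathbf{I}-\mathbf{X})^{-\top}(\mathbf{I}-\mathbf{D}^{\mathrm{in}}(\mathbf{X}))(2\mathbf{I}-\mathbf{X})^{-1}\mathbf{s}$. (ii) Undirected functions, with domain the set of $n\times n$ Laplacian matrices $\mathbf{L}$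 of undirected graphs with nonnegative edge weights: - P-Undir: $f(\mathbf{s},\mathbf{L})=\mathbf{s}^\top(\mathbf{I}+\mathbf{L})^{-2}\mathbf{s}$; - D-Undir: $f(\mathbf{s},\mathbf{L})=\mathbf{s}^\top(\mathbf{I}+\mathbf{L})^{-1}\mathbf{L}(\mathbf{I}+\mathbf{L})^{-1}\mathbf{s}$.
   Context: $\mathbf{1}$ is the all-ones vector and $\mathbf{I}$ the identity matrix. A Laplacian of an undirected weighted graph with weight matrix $\mathbf{W}$ (symmetric, nonnegative, zero diagonal) is $\mathbf{L}=\mathrm{diag}(\mathbf{W}\mathbf{1})-\mathbf{W}$. For a row-stochastic nonnegative $\mathbf{X}$, the matrix $2\mathbf{I}-\mathbf{X}$ is invertible, and $\mathbf{I}+\mathbf{L}$ is invertible for any such Laplacian. A function $f(\mathbf{s},\cdot)$ is called matrix-convex if $f(\mathbf{s},\lambda\mathbf{X}_1+(1-\lambda)\mathbf{X}_2)\le\lambda f(\mathbf{s},\mathbf{X}_1)+(1-\lambda)f(\mathbf{s},\mathbf{X}_2)$ for all $\lambda\in[0,1]$ and all matrices $\mathbf{X}_1,\mathbf{X}_2$ in the domain. *)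

From HB Require Import structures.
From mathcomp Require Import all_boot all_order all_algebra.
From mathcomp Require Import reals.
Set Implicit Arguments. Unset Strict Implicit. Unset Printing Implicit Defensive.
Import Order.TTheory GRing.Theory Num.Theory.
Local Open Scope ring_scope.

Section Defs.
Variable R : realType.

Definition ones (n : nat) : 'cV[R]_n := const_mx 1.

Definition row_stochastic (n : nat) (X : 'M[R]_n) : Prop :=
  (forall i j, 0 <= X i j) /\ X *m ones n = ones n.

Definition is_laplacian (n : nat) (L : 'M[R]_n) : Prop :=
  exists W : 'M[R]_n,
    W^T = W /\ (forall i j, 0 <= W i j) /\ (forall i, W i i = 0) /\
    L = diag_mx (W *m ones n)^T - W.

Definition Din (n : nat) (X : 'M[R]_n) : 'M[R]_n := diag_mx (X^T *m ones n)^T.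

Definition qform (n : nat) (s : 'cV[R]_n) (M : 'M[R]_n) : R :=
  (s^T *m M *m s) 0 0.

Definition invIX (n : nat) (X : 'M[R]_n) : 'M[R]_n := invmx (2%:M - X).

Definition f_PDir (n : nat) (s : 'cV[R]_n) (X : 'M[R]_n) : R :=
  qform s ((invIX X)^T *m invIX X).

Definition f_DDir (n : nat) (s : 'cV[R]_n) (X : 'M[R]_n) : R :=
  2^-1 * qform s ((invIX X)^T *m (1%:M + Din X - 2%:R *: X) *m invIX X).

Definition f_PDDir (n : nat) (s : 'cV[R]_n) (X : 'M[R]_n) : R :=
  2^-1 * qform s ((invIX X)^T *m (1%:M - Din X) *m invIX X).

Definition f_PUndir (n : nat) (s : 'cV[R]_n) (L : 'M[R]_n) : R :=
  qform s (invmx (1%:M + L) *m invmx (1%:M + L)).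

Definition f_DUndir (n : nat) (s : 'cV[R]_n) (L : 'M[R]_n) : R :=
  qform s (invmx (1%:M + L) *m L *m invmx (1%:M + L)).

Definition not_matrix_convex (dom : forall n, 'M[R]_n -> Prop)
    (f : forall n, 'cV[R]_n -> 'M[R]_n -> R) : Prop :=
  exists n : nat, (0 < n)%N /\
  exists (s : 'cV[R]_n) (X1 X2 : 'M[R]_n) (lam : R),
    dom n X1 /\ dom n X2 /\ 0 <= lam <= 1 /\
    f n s (lam *: X1 + (1 - lam) *: X2) > lam * f n s X1 + (1 - lam) * f n s X2.

End Defs.

(* Both 2I - X (X row-stochastic) and I + L (L a Laplacian) are strictly
   diagonally dominant, hence invertible, so each function is a fixed quadratic
   form in the unique solution y of (2I - X) y = s, resp. (I + L) y = s.
   Solving these small systems exactly at two domain points and at their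
   midpoint exhibits a violation of midpoint convexity.  Two vertices suffice
   except for P-Undir: on two vertices it is c / (1 + 2w)^2 in the edge weight
   w, a convex function, so a triangle is needed there. *)
From HB Require Import structures.
From mathcomp Require Import all_boot all_order all_algebra.
From mathcomp Require Import reals lra.
Set Implicit Arguments. Unset Strict Implicit. Unset Printing Implicit Defensive.
Import Order.TTheory GRing.Theory Num.Theory.
Local Open Scope ring_scope.

Section DiagonalDominance.
Variable F : realFieldType.

Definition diag_dominant n (A : 'M[F]_n) : Prop :=
  forall i, \sum_(j | j != i) `|A i j| < `|A i i|.

Lemma diag_dominant_ker0 n (A : 'M[F]_n) (v : 'cV[F]_n) :
  diag_dominant A -> A *m v = 0 -> v = 0.
Proof.
case: n A v => [|n] A v Adom Av0; first by apply/matrixP => -[].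
have [i _ imax] := @arg_maxP _ _ _ ord0 xpredT (fun j => `|v j 0|) isT.
suff vi0 : `|v i 0| <= 0.
  apply/matrixP => j k; rewrite ord1 mxE; apply/normr0_eq0/le_anti.
  by rewrite normr_ge0 andbT (le_trans (imax j isT)).
rewrite leNgt; apply/negP => vi_gt0.
have : `|A i i| * `|v i 0| <= (\sum_(j | j != i) `|A i j|) * `|v i 0|.
  have /matrixP/(_ i 0) := Av0; rewrite !mxE (bigD1 i) //= => /eqP.
  rewrite -normrM addr_eq0 => /eqP ->; rewrite normrN mulr_suml.
  apply: le_trans (ler_norm_sum _ _ _) _; apply: ler_sum => j _.
  by rewrite normrM ler_wpM2l //; apply: imax.
by rewrite ler_pM2r // leNgt Adom.
Qed.

Lemma diag_dominant_unitmx n (A : 'M[F]_n) : diag_dominant A -> A \in unitmx.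
Proof.
move=> Adom; rewrite -unitmx_tr -row_free_unit; apply: inj_row_free => v vA0.
apply: trmx_inj; rewrite trmx0; apply: (diag_dominant_ker0 Adom).
by rewrite -[A]trmxK -trmx_mul vA0 trmx0.
Qed.

End DiagonalDominance.

Section NotMatrixConvex.
Variable R : realType.

Lemma row_stochastic_row_sum n (X : 'M[R]_n) i :
  row_stochastic X -> \sum_j X i j = 1.
Proof.
case=> _ /matrixP/(_ i 0); rewrite !mxE => <-.
by apply: eq_bigr => j _; rewrite mxE mulr1.
Qed.

Lemma row_stochastic_unitmx n (X : 'M[R]_n) :
  row_stochastic X -> 2%:M - X \in unitmx.
Proof.
move=> Xst; have [X_ge0 _] := Xst; apply: diag_dominant_unitmx => i.
have Xii_le1 : X i i <= 1.
  by rewrite -(row_stochastic_row_sum i Xst) (bigD1 i) //= lerDl sumr_ge0.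
rewrite !mxE eqxx mulr1n ger0_norm; last lra.
under eq_bigr => j ji do
  rewrite !mxE eq_sym (negbTE ji) mulr0n sub0r normrN ger0_norm //.
have := row_stochastic_row_sum i Xst; rewrite (bigD1 i) //=; lra.
Qed.

Lemma row_stochastic_convex n (X1 X2 : 'M[R]_n) (lam : R) :
  0 <= lam <= 1 -> row_stochastic X1 -> row_stochastic X2 ->
  row_stochastic (lam *: X1 + (1 - lam) *: X2).
Proof.
case/andP=> lam_ge0 lam_le1 [X1_ge0 X1e] [X2_ge0 X2e]; split.
  by move=> i j; rewrite !mxE addr_ge0 ?mulr_ge0 ?subr_ge0.
by rewrite mulmxDl -!scalemxAl X1e X2e -scalerDl addrC subrK scale1r.
Qed.

Lemma laplacian_sym n (L : 'M[R]_n) : is_laplacian L -> L^T = L.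
Proof. by case=> W [Wsym [_ [_ ->]]]; rewrite linearB /= tr_diag_mx Wsym. Qed.

Lemma laplacian_unitmx n (L : 'M[R]_n) : is_laplacian L -> 1%:M + L \in unitmx.
Proof.
case=> W [_ [W_ge0 [W0 ->]]]; apply: diag_dominant_unitmx => i.
under eq_bigr => j ji do
  rewrite !mxE eq_sym (negbTE ji) !mulr0n add0r sub0r normrN ger0_norm //.
rewrite !mxE eqxx !mulr1n W0 subr0 ger0_norm; last first.
  by rewrite addr_ge0 ?sumr_ge0 // => j _; rewrite mxE mulr1.
under [X in _ < _ + X]eq_bigr do rewrite mxE mulr1.
rewrite [X in _ < _ + X](bigD1 i) //= W0 add0r; lra.
Qed.

Lemma laplacian_conic n (L1 L2 : 'M[R]_n) (a b : R) :
  0 <= a -> 0 <= b -> is_laplacian L1 -> is_laplacian L2 ->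
  is_laplacian (a *: L1 + b *: L2).
Proof.
move=> a_ge0 b_ge0 [W1 [W1sym [W1_ge0 [W10 ->]]]] [W2 [W2sym [W2_ge0 [W20 ->]]]].
exists (a *: W1 + b *: W2); split; last split; last split.
- by rewrite linearD !linearZ /= W1sym W2sym.
- by move=> i j; rewrite !mxE addr_ge0 ?mulr_ge0.
- by move=> i; rewrite !mxE W10 W20 !mulr0 addr0.
by rewrite mulmxDl -!scalemxAl !linearD !linearZ /= addrACA.
Qed.

Lemma laplacian_resolvent_sym n (L : 'M[R]_n) :
  is_laplacian L -> (invmx (1%:M + L))^T = invmx (1%:M + L).
Proof. by move=> Llap; rewrite trmx_inv linearD /= trmx1 laplacian_sym. Qed.

Lemma qform_congr n (s : 'cV[R]_n) (B M : 'M[R]_n) :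
  qform s (B^T *m M *m B) = qform (B *m s) M.
Proof. by rewrite /qform trmx_mul !mulmxA. Qed.

Section Solutions.
Variables (n : nat) (s y : 'cV[R]_n).

Lemma f_PDir_solve (X : 'M[R]_n) :
  row_stochastic X -> (2%:M - X) *m y = s -> f_PDir s X = qform y 1%:M.
Proof.
move=> /row_stochastic_unitmx Xu <-.
by rewrite /f_PDir -[(invIX X)^T]mulmx1 qform_congr mulKmx.
Qed.

Lemma f_DDir_solve (X : 'M[R]_n) :
  row_stochastic X -> (2%:M - X) *m y = s ->
  f_DDir s X = 2^-1 * qform y (1%:M + Din X - 2%:R *: X).
Proof. by move=> /row_stochastic_unitmx Xu <-; rewrite /f_DDir qform_congr mulKmx. Qed.

Lemma f_PDDir_solve (X : 'M[R]_n) :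
  row_stochastic X -> (2%:M - X) *m y = s ->
  f_PDDir s X = 2^-1 * qform y (1%:M - Din X).
Proof. by move=> /row_stochastic_unitmx Xu <-; rewrite /f_PDDir qform_congr mulKmx. Qed.

Lemma f_PUndir_solve (L : 'M[R]_n) :
  is_laplacian L -> (1%:M + L) *m y = s -> f_PUndir s L = qform y 1%:M.
Proof.
move=> Llap <-; rewrite /f_PUndir -{1}(laplacian_resolvent_sym Llap).
by rewrite -[_^T]mulmx1 qform_congr mulKmx ?laplacian_unitmx.
Qed.

Lemma f_DUndir_solve (L : 'M[R]_n) :
  is_laplacian L -> (1%:M + L) *m y = s -> f_DUndir s L = qform y L.
Proof.
move=> Llap <-; rewrite /f_DUndir -{1}(laplacian_resolvent_sym Llap).
by rewrite qform_congr mulKmx ?laplacian_unitmx.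
Qed.

End Solutions.

Lemma midpoint_not_matrix_convex (dom : forall n, 'M[R]_n -> Prop)
    (f : forall n, 'cV[R]_n -> 'M[R]_n -> R) n (s : 'cV[R]_n) (X1 X2 : 'M[R]_n) :
  (0 < n)%N -> dom n X1 -> dom n X2 ->
  f n s X1 + f n s X2 < 2 * f n s (2^-1 *: X1 + (1 - 2^-1) *: X2) ->
  not_matrix_convex dom f.
Proof.
move=> n_gt0 X1dom X2dom ineq; exists n; split=> //.
by exists s, X1, X2, 2^-1; do 3!split=> //; lra.
Qed.

Definition matrix_of_seqs n (rows : seq (seq R)) : 'M[R]_n :=
  \matrix_(i, j) nth 0 (nth [::] rows i) j.

Definition col_of_seq n (entries : seq R) : 'cV[R]_n := \col_i nth 0 entries i.

Ltac small_ord_cases := case => [[|[|[|?]]] ?] //.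
Ltac expand_entries := repeat progress rewrite ?mxE ?big_ord_recl ?big_ord0 /=.
Ltac entrywise := try apply/matrixP; small_ord_cases; try small_ord_cases; expand_entries; lra.
Ltac laplacian_of W :=
  exists W; split; [entrywise | split; [entrywise | split; [entrywise | by []]]].

Lemma PDir_not_matrix_convex : not_matrix_convex (@row_stochastic R) (@f_PDir R).
Proof.
pose X1 : 'M[R]_2 := matrix_of_seqs 2 [:: [:: 1; 0]; [:: 0; 1]].
pose X2 : 'M[R]_2 := matrix_of_seqs 2 [:: [:: 1; 0]; [:: 1; 0]].
have X1st : row_stochastic X1 by split; entrywise.
have X2st : row_stochastic X2 by split; entrywise.
have Xmst := row_stochastic_convex (lam := 2^-1) ltac:(lra) X1st X2st.
apply: (midpoint_not_matrix_convex (s := col_of_seq 2 [:: 2; 1]) _ X1st X2st) => //.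
rewrite (f_PDir_solve (y := col_of_seq 2 [:: 2; 1]) X1st); last by entrywise.
rewrite (f_PDir_solve (y := col_of_seq 2 [:: 2; 3/2]) X2st); last by entrywise.
rewrite (f_PDir_solve (y := col_of_seq 2 [:: 2; 4/3]) Xmst); last by entrywise.
by rewrite /qform; expand_entries; lra.
Qed.

Lemma DDir_not_matrix_convex : not_matrix_convex (@row_stochastic R) (@f_DDir R).
Proof.
pose X1 : 'M[R]_2 := matrix_of_seqs 2 [:: [:: 1; 0]; [:: 0; 1]].
pose X2 : 'M[R]_2 := matrix_of_seqs 2 [:: [:: 0; 1]; [:: 1; 0]].
have X1st : row_stochastic X1 by split; entrywise.
have X2st : row_stochastic X2 by split; entrywise.
have Xmst := row_stochastic_convex (lam := 2^-1) ltac:(lra) X1st X2st.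
apply: (midpoint_not_matrix_convex (s := col_of_seq 2 [:: 1; -1]) _ X1st X2st) => //.
rewrite (f_DDir_solve (y := col_of_seq 2 [:: 1; -1]) X1st); last by entrywise.
rewrite (f_DDir_solve (y := col_of_seq 2 [:: 1/3; -1/3]) X2st); last by entrywise.
rewrite (f_DDir_solve (y := col_of_seq 2 [:: 1/2; -1/2]) Xmst); last by entrywise.
by rewrite /qform /Din; expand_entries; lra.
Qed.

Lemma PDDir_not_matrix_convex : not_matrix_convex (@row_stochastic R) (@f_PDDir R).
Proof.
pose X1 : 'M[R]_2 := matrix_of_seqs 2 [:: [:: 1; 0]; [:: 1; 0]].
pose X2 : 'M[R]_2 := matrix_of_seqs 2 [:: [:: 0; 1]; [:: 0; 1]].
have X1st : row_stochastic X1 by split; entrywise.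
have X2st : row_stochastic X2 by split; entrywise.
have Xmst := row_stochastic_convex (lam := 2^-1) ltac:(lra) X1st X2st.
apply: (midpoint_not_matrix_convex (s := col_of_seq 2 [:: 1; -1]) _ X1st X2st) => //.
rewrite (f_PDDir_solve (y := col_of_seq 2 [:: 1; 0]) X1st); last by entrywise.
rewrite (f_PDDir_solve (y := col_of_seq 2 [:: 0; -1]) X2st); last by entrywise.
rewrite (f_PDDir_solve (y := col_of_seq 2 [:: 1/2; -1/2]) Xmst); last by entrywise.
by rewrite /qform /Din; expand_entries; lra.
Qed.

Lemma PUndir_not_matrix_convex : not_matrix_convex (@is_laplacian R) (@f_PUndir R).
Proof.
pose W1 : 'M[R]_3 := matrix_of_seqs 3 [:: [:: 0; 0; 0]; [:: 0; 0; 2]; [:: 0; 2; 0]].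
pose W2 : 'M[R]_3 := matrix_of_seqs 3 [:: [:: 0; 0; 4]; [:: 0; 0; 2]; [:: 4; 2; 0]].
have L1lap : is_laplacian (diag_mx (W1 *m ones R 3)^T - W1) by laplacian_of W1.
have L2lap : is_laplacian (diag_mx (W2 *m ones R 3)^T - W2) by laplacian_of W2.
have Lmlap := laplacian_conic (a := 2^-1) (b := 1 - 2^-1) ltac:(lra) ltac:(lra) L1lap L2lap.
apply: (midpoint_not_matrix_convex (s := col_of_seq 3 [:: 0; -1; 1]) _ L1lap L2lap) => //.
rewrite (f_PUndir_solve (y := col_of_seq 3 [:: 0; -1/5; 1/5]) L1lap); last by entrywise.
rewrite (f_PUndir_solve (y := col_of_seq 3 [:: 4/37; -9/37; 5/37]) L2lap); last by entrywise.
rewrite (f_PUndir_solve (y := col_of_seq 3 [:: 2/21; -5/21; 1/7]) Lmlap); last by entrywise.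
by rewrite /qform; expand_entries; lra.
Qed.

Lemma DUndir_not_matrix_convex : not_matrix_convex (@is_laplacian R) (@f_DUndir R).
Proof.
pose W1 : 'M[R]_2 := 0.
pose W2 : 'M[R]_2 := matrix_of_seqs 2 [:: [:: 0; 2]; [:: 2; 0]].
have L1lap : is_laplacian (diag_mx (W1 *m ones R 2)^T - W1) by laplacian_of W1.
have L2lap : is_laplacian (diag_mx (W2 *m ones R 2)^T - W2) by laplacian_of W2.
have Lmlap := laplacian_conic (a := 2^-1) (b := 1 - 2^-1) ltac:(lra) ltac:(lra) L1lap L2lap.
apply: (midpoint_not_matrix_convex (s := col_of_seq 2 [:: 3; 0]) _ L1lap L2lap) => //.
rewrite (f_DUndir_solve (y := col_of_seq 2 [:: 3; 0]) L1lap); last by entrywise.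
rewrite (f_DUndir_solve (y := col_of_seq 2 [:: 9/5; 6/5]) L2lap); last by entrywise.
rewrite (f_DUndir_solve (y := col_of_seq 2 [:: 2; 1]) Lmlap); last by entrywise.
by rewrite /qform; expand_entries; lra.
Qed.

End NotMatrixConvex.

Theorem proposition1 (R : realType) :
  not_matrix_convex (@row_stochastic R) (@f_PDir R) /\
  not_matrix_convex (@row_stochastic R) (@f_DDir R) /\
  not_matrix_convex (@row_stochastic R) (@f_PDDir R) /\
  not_matrix_convex (@is_laplacian R) (@f_PUndir R) /\
  not_matrix_convex (@is_laplacian R) (@f_DUndir R).
Proof.
split; first exact: PDir_not_matrix_convex.
split; first exact: DDir_not_matrix_convex.
split; first exact: PDDir_not_matrix_convex.
split; first exact: PUndir_not_matrix_convex.
exact: DUndir_not_matrix_convex.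
Qed.
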